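(* Let $u_1=(1,0)$, $u_2=(0,1)$, $u_3=(1,1)$ in $\mathbb{Z}^2$, $S=\{\pm u_1,\pm u_2,\pm u_3\}$, and $\mathcal{P}=\{P_\alpha\}_{\alpha\in S}$ on $\mathbb{C}^6$ with $P_{u_i}=P_{2i-1}$, $P_{-u_i}=P_{2i}$ ($i=1,2,3$). Then $U(S,\mathcal{P},G_6)$ acting on $\ell^2(\mathbb{Z}^2,\mathbb{C}^6)$ has both $1$ and $-1$ as eigenvalues.
   Context: $P_j$ is the orthogonal projection of $\mathbb{C}^6$ onto $\mathbb{C}\mathbf{e}_j$, $\mathbf{e}_j$ the standard basis. $(\tau^\alpha f)(x)=f(x-\alpha)$, $U(S,\mathcal{P},C)=\big(\sum_{\alpha\in S}\tau^\alpha P_\alpha\big)C$ with $C$ acting pointwise. $G_6=\frac26J-I$, $J$ the $6\times6$ all-ones matrix. Eigenvalue means point spectrum. *)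

From HB Require Import structures.
From mathcomp Require Import all_boot all_order all_algebra.
Set Implicit Arguments. Unset Strict Implicit. Unset Printing Implicit Defensive.
Import Order.TTheory GRing.Theory Num.Theory.
Local Open Scope ring_scope.

Definition pt := (int * int)%type.
Definition ptsub (x a : pt) : pt := (x.1 - a.1, x.2 - a.2).
Definition ptopp (a : pt) : pt := (- a.1, - a.2).

Section Defs.
Variable C : numClosedFieldType.

Definition field6 := pt -> 'cV[C]_6.

Definition is_l2 (f : field6) : Prop :=
  exists B : C, forall s : seq pt, uniq s ->
    \sum_(x <- s) \sum_(i < 6) `|f x i 0| ^+ 2 <= B.

Definition Pj (j : 'I_6) : 'M[C]_6 := delta_mx j j.

(* U(S,P,Cm) f = (sum_{a in S} tau^a P_a) (Cm f), (tau^a g)(x) = g(x - a) *)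
Definition Uop (S : seq pt) (P : pt -> 'M[C]_6) (Cm : 'M[C]_6) (f : field6)
  : field6 := fun x => \sum_(a <- S) P a *m (Cm *m f (ptsub x a)).

Definition G6 : 'M[C]_6 := (2%:R / 6%:R) *: const_mx 1 - 1%:M.

Definition is_eigenvalue (T : field6 -> field6) (l : C) : Prop :=
  exists f : field6, is_l2 f /\ (exists x, f x != 0) /\ forall x, T f x = l *: f x.
End Defs.

Definition u1 : pt := (1, 0).
Definition u2 : pt := (0, 1).
Definition u3 : pt := (1, 1).
Definition S3 : seq pt := [:: u1; ptopp u1; u2; ptopp u2; u3; ptopp u3].

(* 0-based index j of P_j for each element of S:
   P_{u_i} = P_{2i-1}, P_{-u_i} = P_{2i} (1-based), i.e. 0-based 2i-2, 2i-1. *)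
Definition Pfam (C : numClosedFieldType) (a : pt) : 'M[C]_6 :=
  \sum_(j < 6 | nth (0, 0) S3 j == a) Pj C j.

From HB Require Import structures.
From mathcomp Require Import all_boot all_order all_algebra.
From mathcomp Require Import ring.
Import Order.TTheory GRing.Theory Num.Theory.
Local Open Scope ring_scope.

(* Both eigenvalues have eigenvectors supported on the 3 x 3 box {0,1,2}^2.
   Since (G_6 v)_j = (sum_k v_k)/3 - v_j and P_{a_j} = P_j, the eigen-equation
   (U f)(x) = l f(x) reads, coordinatewise, sum_k f(y)_k = 3 (f(y)_j + l f(x)_j)
   with y = x - a_j.  For integer-valued finitely supported f this is a finite
   check, done by computation on explicit integer certificates; a finitely
   supported field is trivially square summable. *)

Definition ptadd (x a : pt) : pt := (x.1 + a.1, x.2 + a.2).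

Lemma ptsubK (a x : pt) : ptadd (ptsub x a) a = x.
Proof. by case: x => x1 x2; rewrite /ptadd /= !subrK. Qed.

Lemma ptaddr0 (x : pt) : ptadd x (0, 0) = x.
Proof. by case: x => x1 x2; rewrite /ptadd /= !addr0. Qed.

Lemma S3_nth_inj : {in gtn 6 &, injective (nth (0, 0) S3)}.
Proof.
move=> i j; rewrite !inE.
case: i => [|[|[|[|[|[|i]]]]]] // _; case: j => [|[|[|[|[|[|j]]]]]] // _.
all: by move/eqP.
Qed.

Section Operator.
Variable C : numClosedFieldType.

Lemma Pfam_nth (j : 'I_6) : Pfam C (nth (0, 0) S3 j) = Pj C j.
Proof.
rewrite /Pfam (big_pred1 j) // => i /=; apply/eqP/eqP => [/S3_nth_inj|-> //].
by move=> /(_ (ltn_ord i) (ltn_ord j)) /val_inj.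
Qed.

Lemma Uop_S3_entry (M : 'M[C]_6) (f : field6 C) (x : pt) (j : 'I_6) :
  Uop S3 (@Pfam C) M f x j 0 = (M *m f (ptsub x (nth (0, 0) S3 j))) j 0.
Proof.
rewrite /Uop (big_nth (0, 0)) big_mkord summxE (bigD1 j) //= big1 => [|k kj].
  rewrite Pfam_nth mxE (bigD1 j) //= big1 => [|k kj].
    by rewrite !mxE !eqxx mul1r !addr0.
  by rewrite !mxE (negPf kj) andbF mul0r.
by rewrite Pfam_nth mxE big1 // => i _; rewrite !mxE eq_sym (negPf kj) mul0r.
Qed.

Lemma G6_mulmx_entry (v : 'cV[C]_6) (j : 'I_6) :
  (G6 C *m v) j 0 = 2%:R / 6%:R * \sum_(k < 6) v k 0 - v j 0.
Proof.
rewrite /G6 mulmxBl mul1mx -scalemxAl !mxE; congr (_ * _ - _).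
by apply: eq_bigr => k _; rewrite mxE mul1r.
Qed.

Lemma Uop_G6_eigen (f : field6 C) (l : C) :
  (forall x (j : 'I_6), let y := ptsub x (nth (0, 0) S3 j) in
     \sum_(k < 6) f y k 0 = 3%:R * (f y j 0 + l * f x j 0)) ->
  forall x, Uop S3 (@Pfam C) (G6 C) f x = l *: f x.
Proof.
move=> eq_f x; apply/matrixP => j k; rewrite (ord1 k) Uop_S3_entry.
rewrite G6_mulmx_entry eq_f !mxE.
have n6 : (6%:R : C) != 0 by rewrite pnatr_eq0.
by field.
Qed.

Lemma finite_support_l2 (supp : seq pt) (f : field6 C) :
  (forall x, x \notin supp -> f x = 0) -> is_l2 f.
Proof.
move=> f0; set g := fun x => \sum_(i < 6) `|f x i 0| ^+ 2.
have g_ge0 x : 0 <= g x by apply: sumr_ge0 => i _; rewrite exprn_ge0.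
exists (\sum_(x <- undup supp) g x) => s s_uniq.
have -> : \sum_(x <- s) g x = \sum_(x <- s | x \in supp) g x.
  rewrite [RHS]big_mkcond; apply: eq_bigr => x _; case: ifP => // /negbT /f0 fx0.
  by rewrite /g big1 // => i _; rewrite fx0 mxE normr0 expr0n.
have perm_s : perm_eq [seq x <- s | x \in supp] [seq x <- undup supp | x \in s].
  apply: uniq_perm; [exact: filter_uniq | exact/filter_uniq/undup_uniq |].
  by move=> x; rewrite !mem_filter mem_undup andbC.
rewrite -big_filter (perm_big _ perm_s) big_filter.
by rewrite [leRHS](bigID (mem s)) /= lerDl sumr_ge0.
Qed.

Definition int_field (g : pt -> nat -> int) : field6 C :=
  fun x => \col_(i < 6) (g x i)%:~R.

Lemma int_field_eigen (g : pt -> nat -> int) (l : int) :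
  (forall x (j : 'I_6), let y := ptsub x (nth (0, 0) S3 j) in
     \sum_(k < 6) g y k = 3 * (g y j + l * g x j)) ->
  forall x, Uop S3 (@Pfam C) (G6 C) (int_field g) x = l%:~R *: int_field g x.
Proof.
move=> eq_g; apply: Uop_G6_eigen => x j y.
under eq_bigr do rewrite mxE.
have -> : \sum_(k < 6) (g y k)%:~R = (\sum_(k < 6) g y k)%:~R :> C.
  by rewrite raddf_sum.
by rewrite eq_g !mxE intrM intrD intrM.
Qed.

End Operator.

Definition box : seq pt := [seq (a%:Z, b%:Z) | a <- iota 0 3, b <- iota 0 3].

Definition box_nbhd : seq pt := [seq ptadd x a | x <- box, a <- (0, 0) :: S3].

(* Row k of a certificate lists the six coordinates at the k-th point of [box]
   (lexicographic order); the field vanishes off [box]. *)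
Definition cert (t : seq (seq int)) (x : pt) (i : nat) : int :=
  if x \in box then nth 0 (nth [::] t (index x box)) i else 0.

Definition cert_eigen (t : seq (seq int)) (l : int) : bool :=
  all (fun x => all (fun j : nat =>
      let y := ptsub x (nth (0, 0) S3 j) in
      \sum_(k <- iota 0 6) cert t y k == 3 * (cert t y j + l * cert t x j))
    (iota 0 6)) box_nbhd.

Lemma cert_eigen_sound (t : seq (seq int)) (l : int) : cert_eigen t l ->
  forall x (j : 'I_6), let y := ptsub x (nth (0, 0) S3 j) in
    \sum_(k < 6) cert t y k = 3 * (cert t y j + l * cert t x j).
Proof.
move=> ok x j y; rewrite -(big_mkord xpredT (cert t y)) -/(iota 0 6).
have [x_nbhd | x_far] := boolP (x \in box_nbhd).
  move/allP: ok => /(_ x x_nbhd) /allP /(_ j).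
  by rewrite mem_iota ltn_ord => /(_ isT) /eqP.
have x_out : x \notin box.
  apply: contra x_far => x_box; rewrite -[x]ptaddr0.
  by apply: allpairs_f; rewrite ?mem_head.
have y_out : y \notin box.
  apply: contra x_far => y_box; rewrite -(ptsubK (nth (0, 0) S3 j) x).
  by apply: allpairs_f; rewrite // inE mem_nth ?orbT.
by rewrite /cert (negPf x_out) (negPf y_out) big1_seq ?mulr0 ?addr0.
Qed.

Lemma cert_is_eigenvalue (C : numClosedFieldType) (t : seq (seq int)) (l : int)
    (x0 : pt) (i0 : 'I_6) :
  cert_eigen t l -> cert t x0 i0 != 0 ->
  is_eigenvalue (Uop S3 (@Pfam C) (G6 C)) l%:~R.
Proof.
move=> ok nz; exists (int_field C (cert t)); split.
  by apply: (@finite_support_l2 C box) => x x_out; apply/matrixP => i k;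
    rewrite !mxE /cert (negPf x_out).
split; last exact/int_field_eigen/cert_eigen_sound.
exists x0; apply: contra nz => /eqP /matrixP /(_ i0 0).
by rewrite !mxE => /eqP; rewrite intr_eq0.
Qed.

Definition cert_one : seq (seq int) :=
 [:: [:: 0; 1; 0; 1; 0; 1];
     [:: 0; 1; 1; 0; 0; 1];
     [:: 0; 0; 0; 0; 0; 0];
     [:: 1; 0; 0; 1; 0; 1];
     [:: 1; 1; 1; 1; 1; 1];
     [:: 0; 1; 1; 0; 1; 0];
     [:: 0; 0; 0; 0; 0; 0];
     [:: 1; 0; 0; 1; 1; 0];
     [:: 1; 0; 1; 0; 1; 0]].

Definition cert_minus_one : seq (seq int) :=
 [:: [:: 0; -1; 0; -1; 0; -1];
     [:: 0; 1; 1; 0; 0; 1];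
     [:: 0; 0; 0; 0; 0; 0];
     [:: 1; 0; 0; 1; 0; 1];
     [:: -1; 1; -1; 1; 1; -1];
     [:: 0; -1; -1; 0; -1; 0];
     [:: 0; 0; 0; 0; 0; 0];
     [:: -1; 0; 0; -1; -1; 0];
     [:: 1; 0; 1; 0; 1; 0]].

Lemma cert_one_eigen : cert_eigen cert_one 1.
Proof. by rewrite /cert_eigen unlock; vm_compute. Qed.

Lemma cert_minus_one_eigen : cert_eigen cert_minus_one (-1).
Proof. by rewrite /cert_eigen unlock; vm_compute. Qed.

Theorem corollary4p2 (C : numClosedFieldType) :
  is_eigenvalue (Uop S3 (@Pfam C) (G6 C)) 1 /\
  is_eigenvalue (Uop S3 (@Pfam C) (G6 C)) (-1).
Proof.
split.
  by have := @cert_is_eigenvalue C _ _ (1, 1) ord0 cert_one_eigen; apply.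
have := @cert_is_eigenvalue C _ _ (1, 1) ord0 cert_minus_one_eigen.
by rewrite rmorphN1; apply.
Qed.
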